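(* Let $V$ be a population of $n$ individuals with pseudo-metric $d$, and let $\ell,k$ be positive integers. Construct collections $\mathcal{G}^\ell,\mathcal{G}^{\ell-1},\dots,\mathcal{G}^1$ as follows: start with a root collection $\mathcal{R}=\{v: v\in V\}$ (each individual is its own group, with $I(v)=\{v\}$); for $t=\ell$ down to $1$, let $\mathcal{G}^t=\mathrm{MGC}(V,d,t\cdot k,\mathcal{R})$, and then for each $H\in\mathcal{G}^t$ remove the groups contained in $H$ from $\mathcal{R}$ and add $H$ to $\mathcal{R}$. Fix $j\in[\ell]$ and let $P\subseteq V$ be a panel containing, for each group $G\in\mathcal{G}^j$, at least one individual of $I(G)$. Then $P$ satisfies $O(4^{\ell-j})$-PFC for population $V$ and panel size $j\cdot k$ (where $O(\cdot)$ hides an absolute constant).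
   Context: Groups are hierarchical: a group is either an individual of $V$ or a set of groups; $I(G)=\{G\}$ if $G\in V$ and $I(G)=\bigcup_{H\in G}I(H)$ otherwise. $B(x,\delta)=\{u\in V: d(x,u)\le\delta\}$. The procedure $\mathrm{MGC}(V,d,K,\mathcal{G})$ (Modified Greedy Capture), where $\mathcal{G}$ is a collection of groups whose sets $I(G)$ partition $V$: set $U=\mathcal{G}$ (uncovered groups), output $\mathcal{G}'=\emptyset$, and increase a radius $\delta$ continuously from $0$ while $U\neq\emptyset$. At each $\delta$: for each already formed output group $G'$ with center $c_{G'}$, remove from $U$ every $H\in U$ with $I(H)\subseteq B(c_{G'},\delta)$; then, while there is $x\in V$ such that $|\bigcup\{I(H): H\in U, I(H)\subseteq B(x,\delta)\}|\ge n/K$, form the new group $N=\{H\in U: I(H)\subseteq B(x,\delta)\}$ with center $c_N=x$ and radius $r_N=\delta$, add $N$ to $\mathcal{G}'$ and remove its members from $U$. Return $\mathcal{G}'$. A set $P\subseteq V$ satisfies $\alpha$-PFC for population $V$ with panel size $K$ if for every $S\subseteq V$ with $|S|\ge n/K$ there exist $v\in S$, $p\in P$ with $d(v,p)\le\alpha\cdot\min_{y\in V}\max_{u\in S}d(u,y)$. *)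

From HB Require Import structures.
From mathcomp Require Import all_boot all_order all_algebra.
From mathcomp Require Import reals.
Set Implicit Arguments. Unset Strict Implicit. Unset Printing Implicit Defensive.
Import Order.TTheory GRing.Theory Num.Theory.
Local Open Scope ring_scope.

Definition pseudo_metric (R : realType) (V : finType) (d : V -> V -> R) : Prop :=
  [/\ (forall x, d x x = 0), (forall x y, 0 <= d x y),
      (forall x y, d x y = d y x) & (forall x y z, d x z <= d x y + d y z)].

Definition cball (R : realType) (V : finType) (d : V -> V -> R) (x : V) (delta : R)
  : {set V} := [set u | d x u <= delta].

Definition thresh (R : realType) (V : finType) (K : nat) : R := #|V|%:R / K%:R.

(* A group is represented by its set of individuals I(G).  An output group of
   MGC is a record: its center, its radius and its set of member groups. *)
Record formed (R : realType) (V : finType) := Formed {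
  center : V; radius : R; members : {set {set V}} }.

Definition Iset (R : realType) (V : finType) (N : formed R V) : {set V} :=
  \bigcup_(H in members N) H.

(* The uncovered groups U at radius delta, when the output groups formed so far
   are s: input groups not put in any formed group and not contained in the
   ball B(c_N, delta) of any formed group N. *)
Definition Ustate (R : realType) (V : finType) (d : V -> V -> R)
  (G : {set {set V}}) (s : seq (formed R V)) (delta : R) : {set {set V}} :=
  [set H in G | all (fun N => (H \notin members N) &&
                              ~~ (H \subset cball d (center N) delta)) s].

Definition capt (R : realType) (V : finType) (d : V -> V -> R)
  (U : {set {set V}}) (x : V) (delta : R) : nat :=
  #|\bigcup_(H in U | H \subset cball d x delta) H|.

(* s (in order of formation) is a possible output of MGC(V, d, K, G),
   the radius delta increasing continuously from 0. *)
Definition MGC_run (R : realType) (V : finType) (d : V -> V -> R)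
  (K : nat) (G : {set {set V}}) (s : seq (formed R V)) : Prop :=
  [/\ sorted <=%R (map (@radius R V) s),
      all (fun N => 0 <= radius N) s,
      (forall pre N post, s = pre ++ N :: post ->
         members N = [set H in Ustate d G pre (radius N) |
                          H \subset cball d (center N) (radius N)]
         /\ thresh R V K <= (#|Iset N|)%:R) &
      (* between consecutive formations (and after the last one) no new group
         can be formed *)
      (forall pre post, s = pre ++ post -> forall delta : R, 0 <= delta ->
         all (fun N => radius N <= delta) pre ->
         all (fun N => delta < radius N) post ->
         forall x, (capt d (Ustate d G pre delta) x delta)%:R < thresh R V K)].

Definition replace (R : realType) (V : finType) (Rc : {set {set V}})
  (out : seq (formed R V)) : {set {set V}} :=
  (Rc :\: \bigcup_(N <- out) members N) :|: [set X | X in [seq Iset N | N <- out]].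

(* The hierarchical construction of G^l, ..., G^1; Rs t is the root
   collection before computing G^t = Gs t. *)
Definition hier_run (R : realType) (V : finType) (d : V -> V -> R) (l k : nat)
  (Rs : nat -> {set {set V}}) (Gs : nat -> seq (formed R V)) : Prop :=
  Rs l = [set [set v] | v : V] /\
  (forall t, (1 <= t <= l)%N ->
     MGC_run d (t * k) (Rs t) (Gs t) /\ Rs t.-1 = replace (Rs t) (Gs t)).

Definition maxd (R : realType) (V : finType) (d : V -> V -> R) (S : {set V}) (y : V) : R :=
  \big[Num.max/0]_(u in S) d u y.

(* min_{y in V} max_{u in S} d(u, y)   (0 if V is empty) *)
Definition rad (R : realType) (V : finType) (d : V -> V -> R) (S : {set V}) : R :=
  match [pick y : V] with
  | Some y0 => \big[Num.min/maxd d S y0]_(y : V) maxd d S y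
  | None => 0
  end.

Definition PFC (R : realType) (V : finType) (d : V -> V -> R) (alpha : R) (K : nat)
  (P : {set V}) : Prop :=
  forall S : {set V}, thresh R V K <= (#|S|)%:R ->
    exists v, exists p, [/\ v \in S, p \in P & d v p <= alpha * rad d S].

From Pilot Require Import Defs.
From HB Require Import structures.
From mathcomp Require Import all_boot all_order all_algebra.
From mathcomp Require Import reals ring lra zify.
Import Order.TTheory GRing.Theory Num.Theory.
Local Open Scope ring_scope.
Set Implicit Arguments. Unset Strict Implicit.

(* Fix S with |S| >= n/(jk) and a point y with rad S = r = max_{u in S} d(u, y).
   Going down the hierarchy, every group of the root collection at level t that meets S
   lies in a ball of radius rho_t = (4^(l-t) - 1) r.  Indeed, at radius r + 2 rho_t all
   groups meeting S lie in B(y, r + 2 rho_t) and cover |S| >= n/(tk) individuals, so MGC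
   must already have covered one of them: some output group N' of radius <= r + 2 rho_t
   has its center within r + 2 rho_t of S.  An output group with a member H meeting S
   then has radius <= 3r + 4 rho_t = rho_(t-1), since otherwise H would have been removed
   from U by N' beforehand.  At level j the group N' contains a panel member, which is
   within 2(r + 2 rho_j) <= 4^(l-j+1) r of a point of S. *)

Definition formed_triple (R : realType) (V : finType) (N : formed R V) :=
  (center N, radius N, members N).

Definition triple_formed (R : realType) (V : finType) (x : V * R * {set {set V}}) :=
  Formed x.1.1 x.1.2 x.2.

Lemma formed_tripleK (R : realType) (V : finType) :
  cancel (@formed_triple R V) (@triple_formed R V).
Proof. by case. Qed.

HB.instance Definition _ (R : realType) (V : finType) :=
  Equality.copy (formed R V) (can_type (@formed_tripleK R V)).

Lemma mem_bigcup_seq (I : Type) (T : finType) (F : I -> {set T}) (s : seq I) x :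
  (x \in \bigcup_(i <- s) F i) = has (fun i => x \in F i) s.
Proof. by elim: s => [|i s IH]; rewrite ?big_nil ?big_cons ?inE // IH. Qed.

Lemma mem_split (T : eqType) (x : T) (s : seq T) :
  x \in s -> exists pre post, s = pre ++ x :: post.
Proof. by case/splitPr => pre post; exists pre, post. Qed.

Lemma sorted_split_at (disp : Order.disp_t) (O : orderType disp) (T : Type) (f : T -> O)
    (s : seq T) (e : O) :
  sorted <=%O (map f s) ->
  exists pre post, [/\ s = pre ++ post, all (fun x => f x <= e)%O pre
                     & all (fun x => e < f x)%O post].
Proof.
elim: s => [|x s IH] /=; first by exists [::], [::].
move=> fxs; have [fx_le|fx_gt] := leP (f x) e.
  have [pre [post [-> pre_le post_gt]]] := IH (path_sorted fxs).
  by exists (x :: pre), post; rewrite /= fx_le.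
exists [::], (x :: s); split => //=; rewrite fx_gt /=.
have := order_path_min le_trans fxs; rewrite all_map.
by apply: sub_all => z /= /(lt_le_trans fx_gt).
Qed.

Lemma sorted_mem_prefix (disp : Order.disp_t) (O : orderType disp) (T : eqType) (f : T -> O)
    pre x post z :
  sorted <=%O (map f (pre ++ x :: post)) -> z \in pre ++ x :: post ->
  (f z < f x)%O -> z \in pre.
Proof.
rewrite map_cat sorted_cat_cons => /andP[_ /(order_path_min le_trans)].
rewrite all_map => fx_le; rewrite mem_cat in_cons => /or3P[// | /eqP-> | zpost].
  by rewrite ltxx.
by rewrite ltNge; move: (allP fx_le z zpost) => /= ->.
Qed.

Lemma le_thresh (R : realType) (V : finType) (m n : nat) :
  (0 < m)%N -> (m <= n)%N -> thresh R V n <= thresh R V m.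
Proof.
move=> m_gt0 le_mn; have n_gt0 := leq_trans m_gt0 le_mn.
by rewrite /thresh ler_wpM2l // lef_pV2 ?posrE ?ltr0n ?ler_nat.
Qed.

Section Radius.
Variables (R : realType) (V : finType) (d : V -> V -> R) (S : {set V}).

Lemma maxd_ge0 y : 0 <= maxd d S y.
Proof. exact: bigmax_ge_id. Qed.

Lemma le_maxd u y : u \in S -> d u y <= maxd d S y.
Proof. exact: le_bigmax_cond. Qed.

Lemma rad_attained : (0 < #|V|)%N -> exists y, Defs.rad d S = maxd d S y.
Proof.
rewrite /Defs.rad; case: pickP => [y0 _ _|noV]; last by case/card_gt0P=> x _; have := noV x.
apply: (big_ind (fun m => exists y, m = maxd d S y)); first by exists y0.
  by move=> _ _ [a ->] [b ->]; rewrite minEle; case: ifP; eexists.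
by move=> y _; exists y.
Qed.

End Radius.

Section GreedyCapture.
Variables (R : realType) (V : finType) (d : V -> V -> R).
Hypothesis pm : pseudo_metric d.

Lemma cball_le x e1 e2 : e1 <= e2 -> cball d x e1 \subset cball d x e2.
Proof. by move=> le_e; apply/subsetP => u; rewrite !inE => /le_trans; apply. Qed.

Lemma cball_trans y c v a b e :
  d y v <= a -> d c v <= b -> cball d c e \subset cball d y (a + b + e).
Proof.
case: pm => _ _ dC dtri dyv dcv; apply/subsetP => u; rewrite !inE => dcu.
by have := dtri y v u; have := dtri v c u; rewrite (dC v c); lra.
Qed.

Definition covering (G : {set {set V}}) := forall v, exists2 H, H \in G & v \in H.

Definition bounded_near (S : {set V}) (rho : R) (G : {set {set V}}) :=
  forall H, H \in G -> (exists2 v, v \in S & v \in H) ->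
    exists c, H \subset cball d c rho.

Section Run.
Variables (K : nat) (G : {set {set V}}) (s : seq (formed R V)).
Hypothesis run : MGC_run d K G s.

Lemma mem_members pre N post H : s = pre ++ N :: post ->
  (H \in members N) =
  (H \in Ustate d G pre (radius N)) && (H \subset cball d (center N) (radius N)).
Proof. by case: run => _ _ form _ /form[-> _]; rewrite inE. Qed.

Lemma members_sub_cball N H : N \in s -> H \in members N ->
  (H \in G) && (H \subset cball d (center N) (radius N)).
Proof.
case/mem_split=> pre [post Es]; rewrite (mem_members _ Es) inE.
by case/andP=> /andP[-> _] ->.
Qed.

Lemma Iset_sub_cball N : N \in s -> Iset N \subset cball d (center N) (radius N).
Proof.
move=> Ns; apply/subsetP => u /bigcupP[H HN uH].
by case/andP: (members_sub_cball Ns HN) => _ /subsetP; apply.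
Qed.

Variables (S : {set V}) (y : V) (r rho : R).
Hypotheses (S_ball : S \subset cball d y r) (r_ge0 : 0 <= r) (rho_ge0 : 0 <= rho).
Hypotheses (S_large : thresh R V K <= #|S|%:R) (G_cov : covering G).
Hypothesis G_near : bounded_near S rho G.

Lemma near_group_sub_cball H v : H \in G -> v \in S -> v \in H ->
  H \subset cball d y (r + rho + rho).
Proof.
move=> HG vS vH; have [c Hc] := G_near HG (ex_intro2 _ _ v vS vH).
have dcv : d c v <= rho by move/subsetP: Hc => /(_ v vH); rewrite inE.
have dyv : d y v <= r by move/subsetP: S_ball => /(_ v vS); rewrite inE.
exact: subset_trans Hc (cball_trans rho dyv dcv).
Qed.

Lemma run_forms_near :
  exists2 N, N \in s & radius N <= r + rho + rho /\
    exists2 v, v \in S & d (center N) v <= r + rho + rho.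
Proof.
case: run => sorted_s _ _ stop; set e := r + rho + rho.
have [pre [post [Es pre_le post_gt]]] := sorted_split_at e sorted_s.
have e_ge0 : 0 <= e by rewrite !addr_ge0.
have small := stop pre post Es e e_ge0 pre_le post_gt y.
have [v vS vU] : exists2 v, v \in S &
    v \notin \bigcup_(H in Ustate d G pre e | H \subset cball d y e) H.
  apply/subsetPn/negP => /subset_leq_card; rewrite -(ler_nat R).
  by move: small S_large; rewrite /capt; lra.
have [H HG vH] := G_cov v.
have H_ball := near_group_sub_cball HG vS vH.
have : H \notin Ustate d G pre e.
  by apply: contra vU => HU; apply/bigcupP; exists H; rewrite ?HU.
rewrite inE HG /= => /allPn[N Npre]; rewrite negb_and !negbK => H_N.
have Ns : N \in s by rewrite Es mem_cat Npre.
have rN := allP pre_le N Npre; exists N => //; split => //; exists v => //.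
have : H \subset cball d (center N) e.
  case/orP: H_N => // HN; case/andP: (members_sub_cball Ns HN) => _ /subset_trans.
  by apply; apply: cball_le.
by move/subsetP => /(_ v vH); rewrite inE.
Qed.

Lemma run_radius_near N H : N \in s -> H \in members N ->
  (exists2 v, v \in S & v \in H) -> radius N <= 3 * r + 4 * rho.
Proof.
case/mem_split=> pre [post Es] HN [v vS vH].
have [N' N's [rN' [v' v'S dN'v']]] := run_forms_near.
rewrite leNgt; apply/negP => far.
have N'pre : N' \in pre.
  have [sorted_s _ _ _] := run; rewrite Es in sorted_s N's.
  apply: (sorted_mem_prefix sorted_s N's).
  by move: rN' far r_ge0 rho_ge0; lra.
move: HN; rewrite (mem_members _ Es) inE => /andP[/andP[HG H_uncov] _].
have dyv' : d y v' <= r by move/subsetP: S_ball => /(_ v' v'S); rewrite inE.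
have : H \subset cball d (center N') (radius N).
  apply: subset_trans (near_group_sub_cball HG vS vH) _.
  apply: subset_trans (cball_trans _ dN'v' dyv') (cball_le _ _).
  by move: far r_ge0 rho_ge0; lra.
by move: (allP H_uncov N' N'pre) => /andP[_ /negP].
Qed.

Lemma bounded_near_replace : bounded_near S (3 * r + 4 * rho) (replace G s).
Proof.
move=> H; rewrite in_setU in_setD; case/orP => [/andP[_ HG] meet | ].
  have [c Hc] := G_near HG meet; exists c; apply: subset_trans Hc (cball_le _ _).
  by move: r_ge0 rho_ge0; lra.
case/imsetP=> _ /mapP[N Ns ->] -> [v vS /bigcupP[H' H'N vH']].
exists (center N); apply: subset_trans (Iset_sub_cball Ns) (cball_le _ _).
exact: run_radius_near Ns H'N (ex_intro2 _ _ v vS vH').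
Qed.

Lemma run_panel_near (P : {set V}) :
  (forall pre N post, s = pre ++ N :: post -> exists2 p, p \in P & p \in Iset N) ->
  exists v p, [/\ v \in S, p \in P & d v p <= 2 * r + 4 * rho].
Proof.
move=> P_hits; have [N Ns [rN [v vS dNv]]] := run_forms_near.
have [pre [post Es]] := mem_split Ns; have [p pP pN] := P_hits _ _ _ Es.
have dNp : d (center N) p <= radius N.
  by move/subsetP: (Iset_sub_cball Ns) => /(_ p pN); rewrite inE.
exists v, p; split => //; case: pm => _ _ dC dtri.
by move: (dtri v (center N) p); rewrite (dC v (center N)); lra.
Qed.

End Run.

Lemma covering_replace G (s : seq (formed R V)) : covering G -> covering (replace G s).
Proof.
move=> G_cov v; have [H HG vH] := G_cov v.
case: (boolP (H \in \bigcup_(N <- s) members N)) => [|H_free]; last first.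
  by exists H; rewrite // in_setU in_setD H_free HG.
rewrite mem_bigcup_seq => /hasP[N Ns HN]; exists (Iset N); last first.
  by apply/bigcupP; exists H.
by rewrite in_setU; apply/orP; right; apply/imsetP; exists (Iset N); rewrite ?map_f.
Qed.

End GreedyCapture.

Lemma hier_bounded_near (R : realType) (V : finType) (d : V -> V -> R)
    (l k : nat) (Rs : nat -> {set {set V}}) (Gs : nat -> seq (formed R V))
    (S : {set V}) (y : V) (r : R) (j : nat) :
  pseudo_metric d -> hier_run d l k Rs Gs -> S \subset cball d y r -> 0 <= r ->
  (0 < j)%N -> (0 < k)%N -> thresh R V (j * k) <= #|S|%:R ->
  forall t, (j <= t <= l)%N ->
    covering (Rs t) /\ bounded_near d S ((4 ^+ (l - t) - 1) * r) (Rs t).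
Proof.
move=> pm [Rs_l step] S_ball r_ge0 j_gt0 k_gt0 S_large t /andP[le_jt le_tl].
suff level m : (m <= l - j)%N ->
    covering (Rs (l - m)%N) /\ bounded_near d S ((4 ^+ m - 1) * r) (Rs (l - m)%N).
  by have := level (l - t)%N; rewrite subKn //; apply; apply: leq_sub2l.
elim: m => [|m IH] le_m.
  rewrite subn0 Rs_l expr0 subrr mul0r.
  split=> [v | _ /imsetP[v _ ->] _]; first by exists [set v]; rewrite ?imset_f ?set11.
  by exists v; apply/subsetP => u; rewrite !inE => /eqP->; case: pm => ->.
have [cov near] := IH (ltnW le_m).
have [run ->] : MGC_run d ((l - m) * k) (Rs (l - m)%N) (Gs (l - m)%N) /\
    Rs (l - m.+1)%N = replace (Rs (l - m)%N) (Gs (l - m)%N).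
  by rewrite subnS; apply: step; lia.
have S_large' : thresh R V ((l - m) * k) <= #|S|%:R.
  by apply: le_trans S_large; rewrite le_thresh ?muln_gt0 ?j_gt0 ?leq_mul //; lia.
have rho_ge0 : 0 <= (4 ^+ m - 1) * r by rewrite mulr_ge0 // subr_ge0 exprn_ege1 ?ler1n.
have -> : (4 ^+ m.+1 - 1) * r = 3 * r + 4 * ((4 ^+ m - 1) * r) by rewrite exprS; ring.
split; first exact: covering_replace.
exact (bounded_near_replace pm run S_ball r_ge0 rho_ge0 S_large' cov near).
Qed.

Theorem lemma1 :
  exists C : nat,
  forall (R : realType) (V : finType) (d : V -> V -> R),
    pseudo_metric d -> (0 < #|V|)%N ->
  forall (l k : nat), (0 < l)%N -> (0 < k)%N ->
  forall (Rs : nat -> {set {set V}}) (Gs : nat -> seq (formed R V)),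
    hier_run d l k Rs Gs ->
  forall j : nat, (1 <= j <= l)%N ->
  forall P : {set V},
    (forall pre N post, Gs j = pre ++ N :: post ->
       exists2 p, p \in P & p \in Iset N) ->
    PFC d (C%:R * 4 ^+ (l - j)) (j * k) P.
Proof.
exists 4%N => R V d pm V_gt0 l k _ k_gt0 Rs Gs hier j j_range P P_hits S S_large.
have /andP[j_gt0 le_jl] := j_range.
have [y ->] := rad_attained d S V_gt0; set r := maxd d S y.
have r_ge0 : 0 <= r := maxd_ge0 d S y.
have S_ball : S \subset cball d y r.
  by apply/subsetP => u uS; rewrite inE; case: pm => _ _ -> _; apply: le_maxd.
have [cov near] : covering (Rs j) /\ bounded_near d S ((4 ^+ (l - j) - 1) * r) (Rs j).
  by apply: (hier_bounded_near pm hier S_ball r_ge0 j_gt0 k_gt0 S_large); rewrite leqnn.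
have [run _] := hier.2 j j_range.
have rho_ge0 : 0 <= (4 ^+ (l - j) - 1) * r by rewrite mulr_ge0 // subr_ge0 exprn_ege1 ?ler1n.
have [v [p [vS pP dvp]]] :=
  run_panel_near pm run S_ball r_ge0 rho_ge0 S_large cov near P_hits.
exists v, p; split => //; apply: le_trans dvp _.
by rewrite mulrBl mul1r -mulrA; move: (mulr_ge0 (exprn_ge0 (l - j) (ler0n R 4)) r_ge0); lra.
Qed.
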